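(* Fix a real number $\alpha>1$ and consider the family $f_a(x)=-|x|^{\alpha}+a$, $a\in\mathbb{R}$. Restrict to parameters $a>1$ for which the rescaled post-critical orbit satisfies $2_a\in(-1,0)$, $3_a\in(0,1)$ and $4_a$ lies strictly between $2_a$ and $-2_a$. For such parameters put $t=p_{1,-1}(2_a)>0$ and $g(t)=p_{2_a,-2_a}(4_a)$. Then the inverse function $g^{-1}\colon\mathbb{R}\to\mathbb{R}_+$ is strictly increasing, and $g'(t)>1$. In particular, the value $g(t)=0$, i.e. $4_a=0$ (the super-stable orbit with kneading sequence $RLRC$), is assumed for only one parameter.
   Context: Poincaré coordinates: for real $p\neq q$ and $x$ strictly between $p$ and $q$ (the oriented open interval $(p,q)$, where $p>q$ is allowed), $p_{p,q}(x)=\ln\frac{x-p}{q-x}$. Rescaled orbit: for $n\ge0$ write $n_a=f_a^n(0)/f_a(0)$ (so $0_a=0$, $1_a=1$), i.e. $n_a$ is the $n$-th iterate of $0$ under $x\mapsto 1-a^{\alpha-1}|x|^{\alpha}$. The kneading sequence $RLRC$ means $1_a>0$, $2_a<0$, $3_a>0$, $4_a=0$. *)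

From Stdlib Require Import Reals.
Open Scope R_scope.

(* |x|^alpha for real alpha > 0, with the convention 0^alpha = 0
   (Stdlib's Rpower 0 alpha would give 1, since ln 0 = 0). *)
Definition absPow (x alpha : R) : R :=
  match Req_EM_T x 0 with
  | left _ => 0
  | right _ => Rpower (Rabs x) alpha
  end.

Definition fam (alpha a x : R) : R := - absPow x alpha + a.

Definition rorb (alpha a : R) (n : nat) : R :=
  Nat.iter n (fam alpha a) 0 / fam alpha a 0.

Definition poinc (p q x : R) : R := ln ((x - p) / (q - x)).

Definition admissible (alpha a : R) : Prop :=
  1 < a /\
  -1 < rorb alpha a 2 < 0 /\
  0 < rorb alpha a 3 < 1 /\
  Rmin (rorb alpha a 2) (- rorb alpha a 2) < rorb alpha a 4 <
    Rmax (rorb alpha a 2) (- rorb alpha a 2).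

Definition tpar (alpha a : R) : R := poinc 1 (-1) (rorb alpha a 2).

Definition gval (alpha a : R) : R :=
  poinc (rorb alpha a 2) (- rorb alpha a 2) (rorb alpha a 4).

(* Put [d = a^(alpha - 1) - 1], so that [2_a = -d], [3_a = 1 - (1 + d) d^alpha],
   [4_a = 1 - (1 + d) (3_a)^alpha] and [t = ln ((1 + d) / (1 - d))], i.e. [d = tanh (t/2)].
   Then [g'(t) > 1] reduces to [V (1 - V) < W d (1 - d)] for [V = (3_a)^alpha] and
   [W = - dV/dd], which follows from two Bernoulli inequalities.  The same inequality
   shows that [d - 4_a] can only cross zero downwards, so the admissible [d] form an
   interval, on which [g] is therefore increasing.  Surjectivity is the intermediate value
   theorem: [4_a] is close to [-d] for small [d] and exceeds [d] before [3_a] vanishes. *)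

From Stdlib Require Import Reals Lra Psatz Ranalysis5.
Open Scope R_scope.

Lemma Rpower_1_l (y : R) : Rpower 1 y = 1.
Proof. unfold Rpower; rewrite ln_1, Rmult_0_r; apply exp_0. Qed.

Lemma Rpower_pos (x y : R) : 0 < Rpower x y.
Proof. apply exp_pos. Qed.

Lemma Rpower_lt_1 (x y : R) : 0 < x < 1 -> 0 < y -> Rpower x y < 1.
Proof. intros Hx Hy; rewrite <- (Rpower_1_l y); apply Rlt_Rpower_l; lra. Qed.

Lemma Rpower_gt_1 (x y : R) : 1 < x -> 0 < y -> 1 < Rpower x y.
Proof. intros Hx Hy; rewrite <- (Rpower_O x) by lra; apply Rpower_lt; lra. Qed.

Lemma Rpower_pred (x y : R) : 0 < x -> Rpower x y = x * Rpower x (y - 1).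
Proof.
  intros Hx; rewrite <- (Rpower_1 x) at 2 by exact Hx.
  rewrite <- Rpower_plus; f_equal; ring.
Qed.

Lemma Rpower_lt_self (x y : R) : 0 < x < 1 -> 1 < y -> Rpower x y < x.
Proof.
  intros Hx Hy; rewrite Rpower_pred by lra.
  assert (Rpower x (y - 1) < 1) by (apply Rpower_lt_1; lra); nra.
Qed.

Lemma Rpower_Rpower_inv (x y : R) : 0 < x -> y <> 0 -> Rpower (Rpower x (/ y)) y = x.
Proof. intros Hx Hy; rewrite Rpower_mult, Rinv_l, Rpower_1 by assumption; reflexivity. Qed.

Lemma Rpower_inj_l (x1 x2 y : R) :
  0 < x1 -> 0 < x2 -> y <> 0 -> Rpower x1 y = Rpower x2 y -> x1 = x2.
Proof.
  unfold Rpower; intros H1 H2 Hy Heq; apply exp_inv in Heq.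
  apply ln_inv; [assumption | assumption | apply (Rmult_eq_reg_l y); assumption].
Qed.

Lemma Rpower_le_small (p e z : R) : 0 < p -> 0 < e -> 0 < z ->
  exists x, 0 < x < z /\ Rpower x p <= e.
Proof.
  intros Hp He Hz.
  set (r := Rpower e (/ p)).
  assert (Hr : 0 < r) by apply Rpower_pos.
  exists (Rmin (z / 2) r); split.
  - split; [apply Rmin_glb_lt | pose proof (Rmin_l (z / 2) r)]; lra.
  - rewrite <- (Rpower_Rpower_inv e p) by lra.
    apply Rle_Rpower_l; [lra | split; [apply Rmin_glb_lt | apply Rmin_r]; lra].
Qed.

Lemma Rpower_bernoulli (x y : R) : 1 <= y -> 0 < x -> 1 + y * (x - 1) <= Rpower x y.
Proof.
  intros Hy Hx.
  (* [phi] is decreasing on [(0, 1]] and increasing on [[1, +oo)] *)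
  set (phi z := Rpower z y - y * z).
  assert (Hder : forall c, 0 < c -> derivable_pt_lim phi c (y * Rpower c (y - 1) - y * 1)).
  { intros c Hc; apply derivable_pt_lim_minus.
    - apply derivable_pt_lim_power; exact Hc.
    - apply (derivable_pt_lim_scal id), derivable_pt_lim_id. }
  assert (H1 : Rpower 1 (y - 1) = 1) by apply Rpower_1_l.
  assert (Hphi1 : phi 1 = 1 - y) by (unfold phi; rewrite Rpower_1_l; ring).
  destruct (Rtotal_order x 1) as [Hlt | [-> | Hgt]].
  - destruct (MVT_cor2 phi (fun c => y * Rpower c (y - 1) - y * 1) x 1 Hlt)
      as [c [Hc Hcx]]; [intros c Hc; apply Hder; lra |].
    assert (Rpower c (y - 1) <= Rpower 1 (y - 1)) by (apply Rle_Rpower_l; lra).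
    assert (0 <= y * (1 - Rpower c (y - 1)) * (1 - x)) by (apply Rmult_le_pos; nra).
    unfold phi in Hc, Hphi1; lra.
  - rewrite Rpower_1_l; lra.
  - destruct (MVT_cor2 phi (fun c => y * Rpower c (y - 1) - y * 1) 1 x Hgt)
      as [c [Hc Hcx]]; [intros c Hc; apply Hder; lra |].
    assert (Rpower 1 (y - 1) <= Rpower c (y - 1)) by (apply Rle_Rpower_l; lra).
    assert (0 <= y * (Rpower c (y - 1) - 1) * (x - 1)) by (apply Rmult_le_pos; nra).
    unfold phi in Hc, Hphi1; lra.
Qed.

Lemma derivable_pt_lim_one_plus (x : R) : derivable_pt_lim (fun y => 1 + y) x 1.
Proof.
  pose proof (derivable_pt_lim_plus (fun _ => 1) id x 0 1
    (derivable_pt_lim_const 1 x) (derivable_pt_lim_id x)) as H.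
  rewrite Rplus_0_l in H; exact H.
Qed.

Lemma derivable_pt_lim_continuity_pt (f : R -> R) (x l : R) :
  derivable_pt_lim f x l -> continuity_pt f x.
Proof. intros H; exact (derivable_continuous_pt f x (exist _ l H)). Qed.

Lemma continuity_pt_near (f : R -> R) (x eps : R) : continuity_pt f x -> 0 < eps ->
  exists del, 0 < del /\ forall y, Rabs (y - x) < del -> Rabs (f y - f x) < eps.
Proof.
  intros Hf Heps; destruct (Hf eps Heps) as [del [Hdel Hnear]].
  exists del; split; [exact Hdel |]; intros y Hy.
  destruct (Req_dec y x) as [-> | Hyx].
  - rewrite Rminus_diag, Rabs_R0; exact Heps.
  - apply Hnear; split; [split; [exact I | congruence] | exact Hy].
Qed.

Lemma derivable_pt_lim_neg_right (f : R -> R) (x l : R) : derivable_pt_lim f x l -> l < 0 ->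
  exists del, 0 < del /\ forall y, x < y < x + del -> f y < f x.
Proof.
  intros Hf Hl; destruct (Hf (- l / 2)) as [del Hdel]; [lra |].
  exists del; split; [apply cond_pos |]; intros y Hy.
  specialize (Hdel (y - x) ltac:(lra) ltac:(rewrite Rabs_right; lra)).
  replace (x + (y - x)) with y in Hdel by ring.
  apply Rabs_def2 in Hdel.
  assert (Hq : (f y - f x) / (y - x) < 0) by lra.
  enough (f y - f x < 0) by lra.
  replace (f y - f x) with ((f y - f x) / (y - x) * (y - x)) by (field; lra).
  apply Rmult_neg_pos; lra.
Qed.

(* Argue at the supremum of [{x in [a, b] | f x <= 0}]. *)
Lemma nonpos_persists (f f' : R -> R) (a b : R) : a < b ->
  (forall x, a <= x <= b -> derivable_pt_lim f x (f' x)) ->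
  (forall x, a <= x <= b -> f x = 0 -> f' x < 0) ->
  f a <= 0 -> f b <= 0.
Proof.
  intros Hab Hder Hcross Ha.
  assert (Hcont : forall x, a <= x <= b -> continuity_pt f x)
    by (intros x Hx; exact (derivable_pt_lim_continuity_pt _ _ _ (Hder x Hx))).
  destruct (Rle_or_lt (f b) 0) as [| Hb]; [assumption | exfalso].
  set (E x := a <= x <= b /\ f x <= 0).
  destruct (completeness E) as [m [Hub Hlub]].
  { exists b; intros x [Hx _]; lra. }
  { exists a; split; [lra | exact Ha]. }
  assert (Ham : a <= m) by (apply Hub; split; [lra | exact Ha]).
  assert (Hmb : m <= b) by (apply Hlub; intros x [Hx _]; lra).
  assert (Hfm : f m <= 0).
  { destruct (Rle_or_lt (f m) 0) as [| Hpos]; [assumption | exfalso].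
    destruct (continuity_pt_near f m (f m) (Hcont m (conj Ham Hmb)) Hpos) as [del [Hdel Hnear]].
    enough (m <= m - del) by lra.
    apply Hlub; intros x [Hx Hfx].
    destruct (Rle_or_lt x (m - del)) as [| Hxm]; [assumption | exfalso].
    assert (x <= m) by (apply Hub; split; assumption).
    specialize (Hnear x ltac:(apply Rabs_def1; lra)); apply Rabs_def2 in Hnear; lra. }
  assert (Hright : exists del, 0 < del /\ forall y, m < y < m + del -> f y < 0).
  { destruct Hfm as [Hneg | Hzero].
    - destruct (continuity_pt_near f m (- f m) (Hcont m (conj Ham Hmb)) ltac:(lra))
        as [del [Hdel Hnear]].
      exists del; split; [exact Hdel |]; intros y Hy.
      specialize (Hnear y ltac:(apply Rabs_def1; lra)); apply Rabs_def2 in Hnear; lra.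
    - destruct (derivable_pt_lim_neg_right f m _ (Hder m (conj Ham Hmb))
        (Hcross m (conj Ham Hmb) Hzero)) as [del [Hdel Hdown]].
      exists del; split; [exact Hdel |]; intros y Hy; rewrite <- Hzero; apply Hdown; exact Hy. }
  destruct Hright as [del [Hdel Hneg]].
  assert (Hmb' : m < b) by (destruct Hmb as [| ->]; [assumption | lra]).
  set (x := Rmin (m + del / 2) b).
  assert (Hx : m < x <= b) by (split; [apply Rmin_glb_lt | apply Rmin_r]; lra).
  assert (Hxdel : x <= m + del / 2) by apply Rmin_l.
  enough (x <= m) by lra.
  apply Hub; split; [lra | left; apply Hneg; lra].
Qed.

(* [tanh (t / 2)], the inverse of [d |-> ln ((1 + d) / (1 - d))] *)
Definition half_tanh (t : R) : R := (exp t - 1) / (exp t + 1).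

Lemma half_tanh_bounds (t : R) : -1 < half_tanh t < 1.
Proof.
  unfold half_tanh; pose proof (exp_pos t).
  split; apply (Rmult_lt_reg_r (exp t + 1)); try lra; field_simplify; lra.
Qed.

Lemma half_tanh_ln (d : R) : -1 < d < 1 -> half_tanh (ln ((1 + d) / (1 - d))) = d.
Proof.
  intros Hd; unfold half_tanh; rewrite exp_ln by (apply Rdiv_lt_0_compat; lra).
  field; lra.
Qed.

Lemma ln_half_tanh (t : R) : ln ((1 + half_tanh t) / (1 - half_tanh t)) = t.
Proof.
  unfold half_tanh; pose proof (exp_pos t).
  replace ((1 + _) / (1 - _)) with (exp t) by (field; lra); apply ln_exp.
Qed.

Lemma half_tanh_increasing (t1 t2 : R) : t1 < t2 -> half_tanh t1 < half_tanh t2.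
Proof.
  intros Ht; unfold half_tanh.
  pose proof (exp_pos t1); pose proof (exp_increasing t1 t2 Ht).
  apply (Rmult_lt_reg_r ((exp t1 + 1) * (exp t2 + 1))); [nra |].
  field_simplify; lra.
Qed.

Lemma derivable_half_tanh (t : R) :
  derivable_pt_lim half_tanh t ((1 - half_tanh t ^ 2) / 2).
Proof.
  unfold half_tanh; pose proof (exp_pos t).
  replace ((1 - _) / 2) with
    ((exp t * (exp t + 1) - exp t * (exp t - 1)) / (exp t + 1)²) by (unfold Rsqr; field; lra).
  apply (derivable_pt_lim_div (fun t => exp t - 1) (fun t => exp t + 1)); [| | lra].
  - rewrite <- (Rminus_0_r (exp t)).
    apply (derivable_pt_lim_minus exp (fun _ => 1));
      [apply derivable_pt_lim_exp | apply derivable_pt_lim_const].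
  - rewrite <- (Rplus_0_r (exp t)).
    apply (derivable_pt_lim_plus exp (fun _ => 1));
      [apply derivable_pt_lim_exp | apply derivable_pt_lim_const].
Qed.

(* Read [q] as [x4 d], [V] as [x3 d ^ alpha] and [W] as [- V'], so that [q'] is the
   derivative of [q]; the left factor below is then the derivative of [p_{-d,d}(q)]. *)
Lemma poinc_slope_gt_1 (d V W q q' : R) : 0 < d < 1 ->
  q = 1 - (1 + d) * V -> q' = - V + (1 + d) * W -> V * (1 - V) < W * d * (1 - d) ->
  - d < q < d ->
  1 < ((q' + 1) / (q + d) - (1 - q') / (d - q)) * ((1 - d ^ 2) / 2).
Proof.
  intros Hd Hq Hq' Hkey Hqd.
  assert (E : ((q' + 1) / (q + d) - (1 - q') / (d - q)) * ((1 - d ^ 2) / 2) - 1 =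
     (1 + d) ^ 2 * (W * d * (1 - d) - V * (1 - V)) / ((q + d) * (d - q))).
  { subst q q'; field; lra. }
  enough (0 < (1 + d) ^ 2 * (W * d * (1 - d) - V * (1 - V)) / ((q + d) * (d - q))) by lra.
  apply Rdiv_lt_0_compat; nra.
Qed.

Lemma fixed_point_slope_gt_1 (d V W q q' : R) : 0 < d < 1 ->
  q = 1 - (1 + d) * V -> q' = - V + (1 + d) * W -> V * (1 - V) < W * d * (1 - d) ->
  q = d -> 1 < q'.
Proof.
  intros Hd Hq Hq' Hkey Hfix; subst q'.
  assert (HV : (1 + d) * V = 1 - d) by lra.
  assert (Hkey' : (1 + d) * (V * (1 - V)) < (1 + d) * (W * d * (1 - d)))
    by (apply Rmult_lt_compat_l; lra).
  replace ((1 + d) * (V * (1 - V))) with ((1 - d) * (1 - V)) in Hkey'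
    by (rewrite <- HV; ring).
  assert (Hd1V : d * (1 + V) < d * ((1 + d) * W)).
  { apply (Rmult_lt_reg_l (1 - d)); [lra |].
    (* at the fixed point [q = d] one has [d (1 + V) = 1 - V] *)
    replace (d * (1 + V)) with (1 - V) by lra; lra. }
  apply Rmult_lt_reg_l in Hd1V; lra.
Qed.

Lemma absPow_0 (al : R) : absPow 0 al = 0.
Proof. unfold absPow; destruct (Req_EM_T 0 0); [reflexivity | congruence]. Qed.

Lemma absPow_nonzero (x al : R) : x <> 0 -> absPow x al = Rpower (Rabs x) al.
Proof. intros Hx; unfold absPow; destruct (Req_EM_T x 0); [congruence | reflexivity]. Qed.

Lemma absPow_scale (a x al : R) : 0 < a -> absPow (a * x) al = Rpower a al * absPow x al.
Proof.
  intros Ha; destruct (Req_dec x 0) as [-> | Hx].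
  - rewrite Rmult_0_r, absPow_0; ring.
  - rewrite !absPow_nonzero by (try apply Rmult_integral_contrapositive_currified; lra).
    rewrite Rabs_mult, (Rabs_right a), Rpower_mult_distr by (try apply Rabs_pos_lt; lra).
    reflexivity.
Qed.

Section Kneading.

Variable alpha : R.
Hypothesis Halpha : 1 < alpha.

(* [x3 d], [x4 d] and [gd d] are [3_a], [4_a] and [g(t)] for [d = dpar a = - 2_a]. *)
Definition dpar (a : R) : R := Rpower a (alpha - 1) - 1.

Definition x3 (d : R) : R := 1 - (1 + d) * Rpower d alpha.
Definition x4 (d : R) : R := 1 - (1 + d) * Rpower (x3 d) alpha.
Definition gd (d : R) : R := ln ((x4 d + d) / (d - x4 d)).

Definition x3_slope (d : R) : R := Rpower d alpha + (1 + d) * (alpha * Rpower d (alpha - 1)).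
Definition x3pow_slope (d : R) : R := alpha * Rpower (x3 d) (alpha - 1) * x3_slope d.
Definition x4_deriv (d : R) : R := - Rpower (x3 d) alpha + (1 + d) * x3pow_slope d.
Definition gd_deriv (d : R) : R :=
  (x4_deriv d + 1) / (x4 d + d) - (1 - x4_deriv d) / (d - x4 d).

Definition admissible_d (d : R) : Prop := 0 < d < 1 /\ 0 < x3 d /\ - d < x4 d < d.

Lemma dpar_pos (a : R) : 1 < a -> 0 < dpar a.
Proof. intros Ha; unfold dpar; pose proof (Rpower_gt_1 a (alpha - 1) Ha ltac:(lra)); lra. Qed.

Lemma dpar_inj (a b : R) : 0 < a -> 0 < b -> dpar a = dpar b -> a = b.
Proof. unfold dpar; intros Ha Hb Hab; apply (Rpower_inj_l a b (alpha - 1)); lra. Qed.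

Lemma dpar_onto (d : R) : 0 < d -> exists a, 1 < a /\ dpar a = d.
Proof.
  intros Hd; exists (Rpower (1 + d) (/ (alpha - 1))); split.
  - apply Rpower_gt_1; [lra | apply Rinv_0_lt_compat; lra].
  - unfold dpar; rewrite Rpower_Rpower_inv by lra; ring.
Qed.

Lemma rorb_S (a : R) (n : nat) : 0 < a ->
  rorb alpha a (S n) = 1 - (1 + dpar a) * absPow (rorb alpha a n) alpha.
Proof.
  intros Ha; unfold rorb, dpar.
  assert (Hf0 : fam alpha a 0 = a) by (unfold fam; rewrite absPow_0; ring).
  rewrite Hf0; change (Nat.iter (S n) (fam alpha a) 0)
    with (fam alpha a (Nat.iter n (fam alpha a) 0)).
  set (y := Nat.iter n (fam alpha a) 0).
  replace y with (a * (y / a)) at 1 by (field; lra).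
  unfold fam; rewrite absPow_scale, (Rpower_pred a alpha) by lra.
  field; lra.
Qed.

Lemma rorb_2 (a : R) : 1 < a -> rorb alpha a 2 = - dpar a.
Proof.
  intros Ha; rewrite !rorb_S by lra.
  replace (rorb alpha a 0) with 0 by (unfold rorb; simpl; field; unfold fam;
    rewrite absPow_0; lra).
  rewrite absPow_0, Rmult_0_r, Rminus_0_r, absPow_nonzero, Rabs_R1, Rpower_1_l by lra.
  ring.
Qed.

Lemma rorb_3 (a : R) : 1 < a -> rorb alpha a 3 = x3 (dpar a).
Proof.
  intros Ha; pose proof (dpar_pos a Ha).
  rewrite rorb_S, rorb_2, absPow_nonzero, Rabs_Ropp, Rabs_right by lra.
  unfold x3; ring.
Qed.

Lemma rorb_4 (a : R) : 1 < a -> 0 < x3 (dpar a) -> rorb alpha a 4 = x4 (dpar a).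
Proof.
  intros Ha Hx3.
  rewrite rorb_S, rorb_3, absPow_nonzero, Rabs_right by lra.
  unfold x4; ring.
Qed.

Lemma x3_lt_1 (d : R) : 0 < d -> x3 d < 1.
Proof. intros Hd; unfold x3; pose proof (Rpower_pos d alpha); nra. Qed.

Lemma x3_antitone (d1 d2 : R) : 0 < d1 <= d2 -> x3 d2 <= x3 d1.
Proof.
  intros Hd; unfold x3.
  assert (Rpower d1 alpha <= Rpower d2 alpha) by (apply Rle_Rpower_l; lra).
  pose proof (Rpower_pos d1 alpha); nra.
Qed.

Lemma x4_gt_opp (d : R) : 0 < d -> 0 < x3 d -> - d < x4 d.
Proof.
  intros Hd Hx3; pose proof (x3_lt_1 d Hd).
  assert (Rpower (x3 d) alpha < 1) by (apply Rpower_lt_1; lra).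
  unfold x4; nra.
Qed.

Lemma x3_scaled_lt (d : R) : 0 < d < 1 -> x3 d * (1 + d) < (1 - d) * (d + alpha * (1 + d)).
Proof.
  intros Hd; unfold x3.
  pose proof (Rpower_pos d alpha) as HA0.
  assert (HbA : 1 + alpha * (d - 1) <= Rpower d alpha) by (apply Rpower_bernoulli; lra).
  set (A := Rpower d alpha) in *.
  destruct (Rle_or_lt 1 (alpha * (1 - d))).
  - assert (0 < (1 + d) * (1 + d) * A) by (apply Rmult_lt_0_compat; nra); nra.
  - assert ((1 + d) * (1 + d) * (1 - alpha * (1 - d)) <= (1 + d) * (1 + d) * A)
      by (apply Rmult_le_compat_l; nra).
    assert (0 < (1 + d) * (1 - alpha * (1 - d)) * d) by (apply Rmult_lt_0_compat; nra).
    nra.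
Qed.

Lemma admissible_iff (a : R) : admissible alpha a <-> 1 < a /\ admissible_d (dpar a).
Proof.
  split.
  - intros [Ha [H2 [H3 H4]]].
    rewrite rorb_2 in H2, H4 by exact Ha; rewrite rorb_3 in H3 by exact Ha.
    rewrite rorb_4 in H4 by (try exact Ha; lra).
    rewrite Rmin_left, Rmax_right in H4 by lra.
    repeat split; lra.
  - intros [Ha [Hd [Hx3 Hx4]]]; pose proof (x3_lt_1 _ (proj1 Hd)).
    unfold admissible; rewrite rorb_2, rorb_3, rorb_4 by assumption.
    rewrite Rmin_left, Rmax_right by lra.
    repeat split; lra.
Qed.

Lemma tpar_eq (a : R) : 1 < a -> dpar a < 1 ->
  tpar alpha a = ln ((1 + dpar a) / (1 - dpar a)).
Proof. intros Ha Hd; unfold tpar, poinc; rewrite rorb_2 by exact Ha; f_equal; field; lra. Qed.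

Lemma gval_eq (a : R) : 1 < a -> 0 < x3 (dpar a) -> gval alpha a = gd (dpar a).
Proof.
  intros Ha Hx3; unfold gval, poinc, gd; rewrite rorb_2, rorb_4 by assumption.
  f_equal; f_equal; ring.
Qed.

Lemma derivable_x3 (d : R) : 0 < d -> derivable_pt_lim x3 d (- x3_slope d).
Proof.
  intros Hd; unfold x3, x3_slope.
  replace (- _) with (0 - (1 * Rpower d alpha + (1 + d) * (alpha * Rpower d (alpha - 1))))
    by ring.
  apply (derivable_pt_lim_minus (fun _ => 1) (fun x => (1 + x) * Rpower x alpha));
    [apply derivable_pt_lim_const |].
  apply (derivable_pt_lim_mult (fun x => 1 + x) (fun x => Rpower x alpha));
    [apply derivable_pt_lim_one_plus | apply derivable_pt_lim_power; exact Hd].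
Qed.

Lemma derivable_x3pow (d : R) : 0 < d -> 0 < x3 d ->
  derivable_pt_lim (fun x => Rpower (x3 x) alpha) d (- x3pow_slope d).
Proof.
  intros Hd Hx3; unfold x3pow_slope.
  replace (- _) with (alpha * Rpower (x3 d) (alpha - 1) * - x3_slope d) by ring.
  apply (derivable_pt_lim_comp x3 (fun x => Rpower x alpha));
    [apply derivable_x3 | apply derivable_pt_lim_power]; assumption.
Qed.

Lemma derivable_x4 (d : R) : 0 < d -> 0 < x3 d -> derivable_pt_lim x4 d (x4_deriv d).
Proof.
  intros Hd Hx3; unfold x4, x4_deriv.
  replace (- _ + _) with
    (0 - (1 * Rpower (x3 d) alpha + (1 + d) * - x3pow_slope d)) by ring.
  apply (derivable_pt_lim_minus (fun _ => 1) (fun x => (1 + x) * Rpower (x3 x) alpha));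
    [apply derivable_pt_lim_const |].
  apply (derivable_pt_lim_mult (fun x => 1 + x) (fun x => Rpower (x3 x) alpha));
    [apply derivable_pt_lim_one_plus | apply derivable_x3pow; assumption].
Qed.

Lemma derivable_gd (d : R) : 0 < d -> 0 < x3 d -> - d < x4 d < d ->
  derivable_pt_lim gd d (gd_deriv d).
Proof.
  intros Hd Hx3 Hx4; unfold gd.
  assert (Hnum : derivable_pt_lim (fun x => x4 x + x) d (x4_deriv d + 1))
    by (apply (derivable_pt_lim_plus x4 id); [apply derivable_x4 | apply derivable_pt_lim_id];
        assumption).
  assert (Hden : derivable_pt_lim (fun x => x - x4 x) d (1 - x4_deriv d))
    by (apply (derivable_pt_lim_minus id x4); [apply derivable_pt_lim_id | apply derivable_x4];
        assumption).
  assert (Hratio := derivable_pt_lim_div _ _ _ _ _ Hnum Hden ltac:(simpl; lra)).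
  assert (Hln := derivable_pt_lim_comp _ ln _ _ _ Hratio
    (derivable_pt_lim_ln _ (Rdiv_lt_0_compat (x4 d + d) (d - x4 d) ltac:(lra) ltac:(lra)))).
  replace (gd_deriv d) with
    (/ ((x4 d + d) / (d - x4 d)) *
     (((x4_deriv d + 1) * (d - x4 d) - (1 - x4_deriv d) * (x4 d + d)) / (d - x4 d)²))
    by (unfold gd_deriv, Rsqr; field; lra).
  exact Hln.
Qed.

(* With [V = x3 d ^ alpha]: Bernoulli gives [1 - V <= alpha (1 - x3 d)], and
   [x3_scaled_lt] bounds the remaining factor [x3 d (1 + d)]. *)
Lemma x3pow_estimate (d : R) : 0 < d < 1 -> 0 < x3 d ->
  Rpower (x3 d) alpha * (1 - Rpower (x3 d) alpha) < x3pow_slope d * d * (1 - d).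
Proof.
  intros Hd Hx3; pose proof (x3_lt_1 d (proj1 Hd)) as Hx3'.
  pose proof (x3_scaled_lt d Hd) as HF.
  unfold x3pow_slope, x3_slope.
  set (U := x3 d) in *.
  set (K := Rpower U (alpha - 1)).
  set (A := Rpower d alpha).
  assert (HUA : U = 1 - (1 + d) * A) by reflexivity.
  assert (HV : Rpower U alpha = U * K) by (apply Rpower_pred; exact Hx3).
  assert (HA : A = d * Rpower d (alpha - 1)) by (apply Rpower_pred; lra).
  assert (HA0 : 0 < A) by apply Rpower_pos.
  assert (HK0 : 0 < K) by apply Rpower_pos.
  assert (HbV : 1 + alpha * (U - 1) <= Rpower U alpha) by (apply Rpower_bernoulli; lra).
  replace (alpha * K * (A + (1 + d) * (alpha * Rpower d (alpha - 1))) * d * (1 - d))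
    with ((alpha * K * A) * ((1 - d) * (d + alpha * (1 + d)))) by (rewrite HA; ring).
  rewrite HV; rewrite HV in HbV.
  assert (H1V : 1 - U * K <= alpha * ((1 + d) * A))
    by (replace ((1 + d) * A) with (1 - U) by lra; lra).
  assert (HakA : 0 < alpha * K * A) by (apply Rmult_lt_0_compat; [nra | lra]).
  assert (U * K * (1 - U * K) <= (alpha * K * A) * (U * (1 + d))).
  { replace ((alpha * K * A) * (U * (1 + d))) with (U * K * (alpha * (1 + d) * A)) by ring.
    apply Rmult_le_compat_l; [nra | lra]. }
  assert ((alpha * K * A) * (U * (1 + d)) < (alpha * K * A) * ((1 - d) * (d + alpha * (1 + d))))
    by (apply Rmult_lt_compat_l; assumption).
  lra.
Qed.

Lemma gd_deriv_gt (d : R) : admissible_d d -> 1 < gd_deriv d * ((1 - d ^ 2) / 2).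
Proof.
  intros [Hd [Hx3 Hx4]].
  apply (poinc_slope_gt_1 d (Rpower (x3 d) alpha) (x3pow_slope d));
    [exact Hd | reflexivity | reflexivity | apply x3pow_estimate | exact Hx4]; assumption.
Qed.

Lemma x4_ge_id_persists (d1 d2 : R) : 0 < d1 < d2 -> d2 < 1 -> 0 < x3 d2 ->
  d1 <= x4 d1 -> d2 <= x4 d2.
Proof.
  intros Hd Hd2 Hx3 Hle.
  assert (Hx3' : forall x, d1 <= x <= d2 -> 0 < x3 x)
    by (intros x Hx; pose proof (x3_antitone x d2 ltac:(lra)); lra).
  enough (d2 - x4 d2 <= 0) by lra.
  apply (nonpos_persists (fun x => x - x4 x) (fun x => 1 - x4_deriv x) d1 d2);
    [lra | | | lra].
  - intros x Hx; apply (derivable_pt_lim_minus id x4);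
      [apply derivable_pt_lim_id | apply derivable_x4; [lra | apply Hx3'; exact Hx]].
  - intros x Hx Hfix; enough (1 < x4_deriv x) by lra.
    apply (fixed_point_slope_gt_1 x (Rpower (x3 x) alpha) (x3pow_slope x) (x4 x));
      [lra | reflexivity | reflexivity | apply x3pow_estimate; [lra | apply Hx3'; exact Hx] | lra].
Qed.

Lemma admissible_d_down (d1 d2 : R) : admissible_d d2 -> 0 < d1 <= d2 -> admissible_d d1.
Proof.
  intros [Hd2 [Hx3 Hx4]] Hd1.
  assert (Hx3' : 0 < x3 d1) by (pose proof (x3_antitone d1 d2 Hd1); lra).
  split; [lra | split; [exact Hx3' | split; [apply x4_gt_opp; lra |]]].
  destruct (Rlt_or_le (x4 d1) d1) as [| Hge]; [assumption | exfalso].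
  destruct Hd1 as [Hd1 [Hlt | ->]]; [| lra].
  pose proof (x4_ge_id_persists d1 d2 ltac:(lra) ltac:(lra) Hx3 Hge); lra.
Qed.

Lemma gd_increasing (d1 d2 : R) : admissible_d d1 -> admissible_d d2 -> d1 < d2 ->
  gd d1 < gd d2.
Proof.
  intros Hd1 Hd2 Hlt.
  assert (Hadm : forall c, d1 <= c <= d2 -> admissible_d c)
    by (intros c Hc; apply (admissible_d_down c d2 Hd2); destruct Hd1; lra).
  destruct (MVT_cor2 gd gd_deriv d1 d2 Hlt) as [c [Hc Hcd]].
  { intros c Hc; destruct (Hadm c Hc) as [Hd [Hx3 Hx4]]; apply derivable_gd; lra. }
  pose proof (gd_deriv_gt c (Hadm c ltac:(lra))).
  destruct (Hadm c ltac:(lra)) as [Hc01 _].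
  assert (0 < gd_deriv c) by (assert (0 < (1 - c ^ 2) / 2) by nra; nra).
  nra.
Qed.

(* If [(1 + z)^2 z^(alpha - 1) = 2] then [x3 z = (1 - z) / (1 + z)], and
   [x4 z > z] because [x3 z^alpha < x3 z]. *)
Lemma exists_x4_gt_id : exists z, 0 < z < 1 /\ 0 < x3 z /\ z < x4 z.
Proof.
  set (psi x := (1 + x) * (1 + x) * Rpower x (alpha - 1) - 2).
  assert (Hcont : forall x, 1 / 4 <= x <= 1 -> continuity_pt psi x).
  { intros x Hx; apply (derivable_pt_lim_continuity_pt _ _
      ((1 * (1 + x) + (1 + x) * 1) * Rpower x (alpha - 1)
       + (1 + x) * (1 + x) * ((alpha - 1) * Rpower x (alpha - 1 - 1)) - 0)).
    apply (derivable_pt_lim_minus (fun x => (1 + x) * (1 + x) * Rpower x (alpha - 1))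
      (fun _ => 2)); [| apply derivable_pt_lim_const].
    apply (derivable_pt_lim_mult (fun x => (1 + x) * (1 + x)) (fun x => Rpower x (alpha - 1)));
      [| apply derivable_pt_lim_power; lra].
    apply (derivable_pt_lim_mult (fun x => 1 + x) (fun x => 1 + x));
      apply derivable_pt_lim_one_plus. }
  assert (Hquarter : psi (1 / 4) < 0).
  { unfold psi; assert (Rpower (1 / 4) (alpha - 1) < 1) by (apply Rpower_lt_1; lra).
    pose proof (Rpower_pos (1 / 4) (alpha - 1)); nra. }
  assert (Hone : 0 < psi 1) by (unfold psi; rewrite Rpower_1_l; lra).
  destruct (IVT_interv psi (1 / 4) 1 Hcont ltac:(lra) Hquarter Hone) as [z [Hz Hpsi]].
  assert (Hz1 : z < 1) by (destruct (Req_dec z 1) as [-> |]; [lra | lra]).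
  unfold psi in Hpsi.
  assert (Hx3 : x3 z = (1 - z) / (1 + z)).
  { unfold x3; rewrite Rpower_pred by lra.
    replace (1 - z) with ((1 + z) - z * ((1 + z) * (1 + z) * Rpower z (alpha - 1))) by nra.
    field; lra. }
  assert (Hx3pos : 0 < x3 z) by (rewrite Hx3; apply Rdiv_lt_0_compat; lra).
  exists z; split; [lra | split; [exact Hx3pos |]].
  assert (Rpower (x3 z) alpha < x3 z) by (apply Rpower_lt_self; [split; [| apply x3_lt_1] |]; lra).
  unfold x4; rewrite Hx3 in *.
  enough ((1 + z) * Rpower ((1 - z) / (1 + z)) alpha < (1 + z) * ((1 - z) / (1 + z))).
  { replace ((1 + z) * ((1 - z) / (1 + z))) with (1 - z) in * by (field; lra); lra. }
  apply Rmult_lt_compat_l; lra.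
Qed.

(* For small [d], Bernoulli gives [x4 d <= - d + alpha (1 + d)^2 d^alpha]. *)
Lemma exists_x4_lt_scaled (y z : R) : -1 < y -> 0 < z < 1 -> 0 < x3 z ->
  exists d, 0 < d < z /\ x4 d < y * d.
Proof.
  intros Hy Hz Hx3z.
  destruct (Rpower_le_small (alpha - 1) ((1 + y) / (4 * alpha)) z) as [d [Hd HB]];
    [lra | apply Rdiv_lt_0_compat; lra | lra |].
  exists d; split; [exact Hd |].
  assert (Hx3 : 0 < x3 d) by (pose proof (x3_antitone d z ltac:(lra)); lra).
  assert (Hbern : 1 + alpha * (x3 d - 1) <= Rpower (x3 d) alpha)
    by (apply Rpower_bernoulli; lra).
  assert (Hx3d : x3 d = 1 - (1 + d) * (d * Rpower d (alpha - 1)))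
    by (unfold x3; rewrite Rpower_pred by lra; reflexivity).
  set (B := Rpower d (alpha - 1)) in *.
  assert (HB0 : 0 < B) by apply Rpower_pos.
  assert (Hx4 : x4 d <= - d + alpha * (1 + d) * (1 + d) * B * d).
  { replace (1 + alpha * (x3 d - 1)) with (1 - alpha * ((1 + d) * (d * B))) in Hbern
      by (rewrite Hx3d; ring).
    assert ((1 + d) * (1 - alpha * ((1 + d) * (d * B))) <= (1 + d) * Rpower (x3 d) alpha)
      by (apply Rmult_le_compat_l; lra).
    unfold x4; lra. }
  assert (Hsmall : alpha * (1 + d) * (1 + d) * B < 1 + y).
  { assert (alpha * B <= (1 + y) / 4).
    { replace ((1 + y) / 4) with (alpha * ((1 + y) / (4 * alpha))) by (field; lra).
      apply Rmult_le_compat_l; lra. }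
    assert (alpha * B * ((1 + d) * (1 + d)) < alpha * B * 4) by (apply Rmult_lt_compat_l; nra).
    nra. }
  nra.
Qed.

Lemma x4_hits_line (y : R) : -1 < y < 1 -> exists d, admissible_d d /\ x4 d = y * d.
Proof.
  intros Hy.
  destruct exists_x4_gt_id as [z [Hz [Hx3z Hx4z]]].
  destruct (exists_x4_lt_scaled y z ltac:(lra) Hz Hx3z) as [d1 [Hd1 Hx4d1]].
  assert (Hx3 : forall x, d1 <= x <= z -> 0 < x3 x)
    by (intros x Hx; pose proof (x3_antitone x z ltac:(lra)); lra).
  set (phi x := x4 x - y * x).
  assert (Hcont : forall x, d1 <= x <= z -> continuity_pt phi x).
  { intros x Hx; apply (derivable_pt_lim_continuity_pt _ _ (x4_deriv x - y * 1)).
    apply (derivable_pt_lim_minus x4 (fun x => y * x));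
      [apply derivable_x4; [lra | apply Hx3; exact Hx] |].
    apply (derivable_pt_lim_scal id), derivable_pt_lim_id. }
  destruct (IVT_interv phi d1 z Hcont ltac:(lra) ltac:(unfold phi; lra) ltac:(unfold phi; nra))
    as [d [Hd Hphi]].
  exists d; unfold phi in Hphi.
  pose proof (Hx3 d Hd); pose proof (x4_gt_opp d ltac:(lra) ltac:(assumption)).
  repeat split; nra.
Qed.

Lemma admissible_of_d (d : R) : admissible_d d -> exists a, admissible alpha a /\ dpar a = d.
Proof.
  intros Hd; destruct (dpar_onto d ltac:(destruct Hd; lra)) as [a [Ha Hda]].
  exists a; split; [apply admissible_iff; rewrite Hda; split |]; assumption.
Qed.

Lemma admissible_dpar (a : R) : admissible alpha a -> admissible_d (dpar a).
Proof. intros Ha; apply admissible_iff; exact Ha. Qed.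

Lemma half_tanh_tpar (a : R) : admissible alpha a -> half_tanh (tpar alpha a) = dpar a.
Proof.
  intros Ha; apply admissible_iff in Ha as [Ha [Hd _]].
  rewrite tpar_eq by (assumption || lra); apply half_tanh_ln; lra.
Qed.

Lemma gval_gd (a : R) : admissible alpha a -> gval alpha a = gd (dpar a).
Proof. intros Ha; apply admissible_iff in Ha as [Ha [_ [Hx3 _]]]; apply gval_eq; assumption. Qed.

Lemma tpar_pos (a : R) : admissible alpha a -> 0 < tpar alpha a.
Proof.
  intros Ha; apply admissible_iff in Ha as [Ha [Hd _]].
  rewrite tpar_eq, <- ln_1 by (assumption || lra).
  apply ln_increasing; [lra |].
  apply (Rmult_lt_reg_r (1 - dpar a)); [lra |]; field_simplify; lra.
Qed.

Lemma gval_increasing (a b : R) : admissible alpha a -> admissible alpha b ->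
  tpar alpha a < tpar alpha b -> gval alpha a < gval alpha b.
Proof.
  intros Ha Hb Ht; rewrite !gval_gd by assumption.
  apply gd_increasing; try apply admissible_dpar; try assumption.
  rewrite <- !half_tanh_tpar by assumption; apply half_tanh_increasing; exact Ht.
Qed.

Lemma gval_surjective (s : R) : exists a, admissible alpha a /\ gval alpha a = s.
Proof.
  pose proof (half_tanh_bounds s) as Hy.
  destruct (x4_hits_line (half_tanh s) Hy) as [d [Hd Hx4]].
  destruct (admissible_of_d d Hd) as [a [Ha Hda]].
  exists a; split; [exact Ha |].
  rewrite gval_gd, Hda by exact Ha; unfold gd; rewrite Hx4.
  destruct Hd as [Hd _].
  replace ((half_tanh s * d + d) / (d - half_tanh s * d))
    with ((1 + half_tanh s) / (1 - half_tanh s)) by (field; split; nra).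
  apply ln_half_tanh.
Qed.

Lemma derivable_g (a : R) : admissible alpha a ->
  exists l, derivable_pt_lim (fun t => gd (half_tanh t)) (tpar alpha a) l /\ 1 < l.
Proof.
  intros Ha; pose proof (half_tanh_tpar a Ha) as Hd.
  pose proof (admissible_dpar a Ha) as Hadm; rewrite <- Hd in Hadm.
  exists (gd_deriv (half_tanh (tpar alpha a)) * ((1 - half_tanh (tpar alpha a) ^ 2) / 2)).
  split; [| apply gd_deriv_gt; exact Hadm].
  apply (derivable_pt_lim_comp half_tanh gd); [apply derivable_half_tanh |].
  destruct Hadm as [Hd01 [Hx3 Hx4]]; apply derivable_gd; lra.
Qed.

Lemma unique_superstable : exists! a, admissible alpha a /\ rorb alpha a 4 = 0.
Proof.
  destruct (x4_hits_line 0 ltac:(lra)) as [d [Hd Hx4]]; rewrite Rmult_0_l in Hx4.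
  destruct (admissible_of_d d Hd) as [a [Ha Hda]].
  assert (Hzero : forall b, admissible alpha b -> rorb alpha b 4 = 0 -> gd (dpar b) = 0).
  { intros b Hb H4; apply admissible_iff in Hb as [Hb [Hdb [Hx3 _]]].
    rewrite rorb_4 in H4 by assumption.
    unfold gd; rewrite H4, Rplus_0_l, Rminus_0_r, Rdiv_diag by lra; apply ln_1. }
  assert (H4a : rorb alpha a 4 = 0).
  { apply admissible_iff in Ha as [Ha1 [_ [Hx3 _]]]; rewrite rorb_4, Hda; assumption. }
  exists a; split; [split; assumption |].
  intros b [Hb H4b].
  pose proof (Hzero a Ha H4a) as Hga; pose proof (Hzero b Hb H4b) as Hgb.
  pose proof (admissible_dpar a Ha) as Hda'; pose proof (admissible_dpar b Hb) as Hdb'.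
  apply dpar_inj; [apply admissible_iff in Ha as [? _] | apply admissible_iff in Hb as [? _] |];
    try lra.
  destruct (Rtotal_order (dpar a) (dpar b)) as [Hlt | [Heq | Hgt]]; [exfalso | exact Heq | exfalso].
  - pose proof (gd_increasing _ _ Hda' Hdb' Hlt); lra.
  - pose proof (gd_increasing _ _ Hdb' Hda' Hgt); lra.
Qed.

End Kneading.

Theorem theorem3p1 (alpha : R) (Halpha : 1 < alpha) :
  (forall a, admissible alpha a -> 0 < tpar alpha a) /\
  exists g : R -> R,
    (forall a, admissible alpha a -> g (tpar alpha a) = gval alpha a) /\
    (forall s : R, exists a, admissible alpha a /\ gval alpha a = s) /\
    (forall a b, admissible alpha a -> admissible alpha b ->
       tpar alpha a < tpar alpha b -> gval alpha a < gval alpha b) /\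
    (forall a, admissible alpha a ->
       exists l, derivable_pt_lim g (tpar alpha a) l /\ 1 < l) /\
    (exists! a, admissible alpha a /\ rorb alpha a 4 = 0).
Proof.
  split; [exact (tpar_pos alpha Halpha) |].
  exists (fun t => gd alpha (half_tanh t)).
  split; [| split; [| split; [| split]]].
  - intros a Ha; rewrite half_tanh_tpar, gval_gd by assumption; reflexivity.
  - exact (gval_surjective alpha Halpha).
  - exact (gval_increasing alpha Halpha).
  - exact (derivable_g alpha Halpha).
  - exact (unique_superstable alpha Halpha).
Qed.
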